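(* Let $\varphi=\frac{1+\sqrt5}{2}$ and for every integer $m$ let $F_m=\frac{\varphi^m-(-1/\varphi)^m}{\varphi+1/\varphi}$; let $F_0!=1$, $F_n!=F_1\cdots F_n$. For a real constant $a$ define the Golden polynomials $P_0(x)=1$ and, for $n\ge1$, $$P_n(x)=\frac{(x-a)_F^n}{F_n!},\qquad (x-a)_F^n=\prod_{k=0}^{n-1}\big(x-(-1)^k\varphi^{\,n-1-2k}a\big).$$ Then $D_FP_n=P_{n-1}$ for $n\ge1$ (where $D_F$ is the linear operator on polynomials in $x$ with $D_Fx^m=F_mx^{m-1}$, $D_F1=0$), and for every $n\ge1$, respectively $n\ge0$, $$P_{2n}(x)=\frac1{F_{2n}!}\prod_{k=1}^n\Big(x^2-(-1)^{n+k}(F_{2k-1}+2F_{2k-2})xa-a^2\Big),$$ $$P_{2n+1}(x)=\frac{x-(-1)^na}{F_{2n+1}!}\prod_{k=1}^n\Big(x^2-(-1)^{n+k}(F_{2k}+2F_{2k-1})xa+a^2\Big).$$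
   Context: Empty products equal $1$. *)

From HB Require Import structures.
From mathcomp Require Import all_boot all_order all_algebra.
Set Implicit Arguments. Unset Strict Implicit. Unset Printing Implicit Defensive.
Import Order.TTheory GRing.Theory Num.Theory.
Local Open Scope ring_scope.

Section Golden.
Variable R : rcfType.

Definition phi : R := (1 + Num.sqrt 5) / 2.

Definition Fib (m : nat) : R :=
  (phi ^+ m - (- phi^-1) ^+ m) / (phi + phi^-1).

Definition Ffact (n : nat) : R := \prod_(1 <= i < n.+1) Fib i.

Definition golden_binom (a : R) (n : nat) : {poly R} :=
  \prod_(k < n)
     ('X - ((-1) ^+ k * phi ^ ((n.-1)%:Z - (2 * k)%:Z) * a)%:P).

Definition Pgold (a : R) (n : nat) : {poly R} :=
  (Ffact n)^-1 *: golden_binom a n.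

Definition DF (p : {poly R}) : {poly R} :=
  \poly_(i < (size p).-1) (Fib i.+1 * p`_i.+1).

End Golden.

From Pilot Require Import Defs.
From HB Require Import structures.
From mathcomp Require Import all_boot all_order all_algebra.
From mathcomp Require Import ring lra zify.
Import Order.TTheory GRing.Theory Num.Theory.
Local Open Scope ring_scope.

(* With psi = 1 - phi = -1/phi, the roots of (x - a)_F^n are phi^(n-1-k) psi^k a,
   so (x - a)_F^n is a (p,q)-binomial with p q = -1.  By Binet's formula,
   (phi + 1/phi) x D_F p = p(phi x) - p(psi x), and dilating the (p,q)-binomial by
   phi (resp. psi) peels off its last (resp. first) factor, which gives
   D_F (x - a)_F^(n+1) = F_(n+1) (x - a)_F^n.  Pairing the roots symmetric about the
   middle one multiplies two linear factors into a quadratic whose middle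
   coefficient is the Lucas number phi^e + psi^e = F_(e) + 2 F_(e-1). *)

Lemma signr_double (R : pzRingType) (j : nat) : (-1) ^+ (2 * j) = 1 :> R.
Proof. by rewrite mulnC exprM sqrr_sign. Qed.

Lemma signr_subn_addn (R : pzRingType) (n j : nat) :
  (j <= n)%N -> (-1) ^+ (n - j) = (-1) ^+ (n + j) :> R.
Proof.
move=> le_jn; have -> : (n + j = (n - j) + 2 * j)%N by lia.
by rewrite exprD signr_double mulr1.
Qed.

Lemma comp_polyZX (R : comNzRingType) (c : R) (p : {poly R}) :
  p \Po (c *: 'X) = \poly_(i < size p) (c ^+ i * p`_i).
Proof.
rewrite comp_polyE poly_def; apply: eq_bigr => i _.
by rewrite exprZn scalerA mulrC.
Qed.

Section PairedProducts.
Variable R : comNzRingType.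

Lemma prodr_ord_even_pairs (F : nat -> R) m :
  \prod_(k < 2 * m) F k = \prod_(1 <= j < m.+1) (F (m - j)%N * F (m - 1 + j)%N).
Proof.
elim: m F => [|m IH] F; first by rewrite muln0 big_ord0 big_geq.
have -> : (2 * m.+1 = (2 * m).+2)%N by lia.
rewrite big_ord_recr big_ord_recl /= (IH (fun k => F k.+1)) [RHS]big_nat_recr //=.
rewrite (@eq_big_nat _ _ _ 1 m.+1 _
           (fun j => F (m.+1 - j)%N * F (m.+1 - 1 + j)%N)); last first.
  by move=> j /andP [j_ge1 j_le]; congr (F _ * F _); lia.
rewrite subnn /bump /=.
have -> : (m.+1 - 1 + m.+1 = (2 * m).+1)%N by lia.
ring.
Qed.

Lemma prodr_ord_odd_pairs (F : nat -> R) m :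
  \prod_(k < (2 * m).+1) F k = F m * \prod_(1 <= j < m.+1) (F (m - j)%N * F (m + j)%N).
Proof.
elim: m F => [|m IH] F.
  by rewrite muln0 big_ord_recl big_ord0 big_geq // !mulr1.
have -> : ((2 * m.+1).+1 = ((2 * m).+1).+2)%N by lia.
rewrite big_ord_recr big_ord_recl /= (IH (fun k => F k.+1)).
rewrite [X in _ = _ * X]big_nat_recr //=.
rewrite (@eq_big_nat _ _ _ 1 m.+1 _
           (fun j => F (m.+1 - j)%N * F (m.+1 + j)%N)); last first.
  by move=> j /andP [j_ge1 j_le]; congr (F _ * F _); lia.
rewrite subnn /bump /=.
have -> : (m.+1 + m.+1 = ((2 * m).+1).+1)%N by lia.
ring.
Qed.

End PairedProducts.

Section PQBinomial.
Variables (R : comNzRingType) (x y : R).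
Hypothesis xy_eqN1 : x * y = -1.

Definition pq_binom (a : R) (n : nat) : {poly R} :=
  \prod_(k < n) ('X - (x ^+ (n.-1 - k) * y ^+ k * a)%:P).

Lemma pq_binomS_dilate_l a m :
  pq_binom a m.+1 \Po (x *: 'X) = x ^+ m.+1 *: (pq_binom a m * ('X + (y ^+ m.+1 * a)%:P)).
Proof.
rewrite /pq_binom rmorph_prod big_ord_recr /=.
have dilate_factor (k : 'I_m) :
    ('X - (x ^+ (m - k) * y ^+ k * a)%:P) \Po (x *: 'X)
    = x *: ('X - (x ^+ (m.-1 - k) * y ^+ k * a)%:P).
  rewrite comp_polyB comp_polyX comp_polyC scalerBr -!mul_polyC -polyCM.
  have -> : (m - k = (m.-1 - k).+1)%N by case: k => k /= lt_km; lia.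
  by rewrite exprS !mulrA.
rewrite (eq_bigr _ (fun k _ => dilate_factor k)) scaler_prodl card_ord.
rewrite comp_polyB comp_polyX comp_polyC subnn expr0 mul1r.
have -> : x *: 'X - (y ^+ m * a)%:P = x *: ('X + (y ^+ m.+1 * a)%:P).
  rewrite scalerDr; congr (_ + _); rewrite -mul_polyC -polyCM -polyCN; congr _%:P.
  by rewrite exprS; ring: xy_eqN1.
by rewrite -scalerAl -scalerAr scalerA -exprSr.
Qed.

Lemma pq_binomS_dilate_r a m :
  pq_binom a m.+1 \Po (y *: 'X) = y ^+ m.+1 *: (('X + (x ^+ m.+1 * a)%:P) * pq_binom a m).
Proof.
rewrite /pq_binom rmorph_prod big_ord_recl /=.
have dilate_factor (k : 'I_m) :
    ('X - (x ^+ (m - k.+1) * y ^+ k.+1 * a)%:P) \Po (y *: 'X)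
    = y *: ('X - (x ^+ (m.-1 - k) * y ^+ k * a)%:P).
  rewrite comp_polyB comp_polyX comp_polyC scalerBr -!mul_polyC -polyCM.
  have -> : (m - k.+1 = m.-1 - k)%N by lia.
  by rewrite exprS mulrCA !mulrA.
rewrite (eq_bigr _ (fun k _ => dilate_factor k)) scaler_prodl card_ord.
rewrite comp_polyB comp_polyX comp_polyC subn0 expr0 mulr1.
have -> : y *: 'X - (x ^+ m * a)%:P = y *: ('X + (x ^+ m.+1 * a)%:P).
  rewrite scalerDr; congr (_ + _); rewrite -mul_polyC -polyCM -polyCN; congr _%:P.
  by rewrite exprS; ring: xy_eqN1.
by rewrite -scalerAr -scalerAl scalerA -exprSr.
Qed.

Lemma pq_factor_pairE a i e :
  ('X - (x ^+ (i + e) * y ^+ i * a)%:P) * ('X - (x ^+ i * y ^+ (i + e) * a)%:P)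
  = 'X^2 - ((-1) ^+ i * (x ^+ e + y ^+ e) * a) *: 'X + ((-1) ^+ e * a ^+ 2)%:P.
Proof.
have xy_expr k : x ^+ k * y ^+ k = (-1) ^+ k by rewrite -exprMn xy_eqN1.
have -> : x ^+ (i + e) * y ^+ i = (-1) ^+ i * x ^+ e by rewrite exprD mulrAC xy_expr mulrC.
have -> : x ^+ i * y ^+ (i + e) = (-1) ^+ i * y ^+ e by rewrite exprD mulrA xy_expr.
have sign_sq : (-1) ^+ i * (-1) ^+ i = 1 :> R by rewrite -exprMn mulrNN mulr1 expr1n.
have xy_e := xy_expr e.
set s := (-1) ^+ i in sign_sq *; set u := x ^+ e in xy_e *; set v := y ^+ e in xy_e *.
have -> : (-1) ^+ e * a ^+ 2 = (s * u * a) * (s * v * a) by rewrite -xy_e; ring: sign_sq.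
rewrite -mul_polyC !polyCM polyCD; ring.
Qed.

Lemma pq_binom_even a n :
  pq_binom a (2 * n) =
  \prod_(1 <= j < n.+1)
    ('X^2 - ((-1) ^+ (n + j) * (x ^+ (2 * j - 1) + y ^+ (2 * j - 1)) * a) *: 'X
       - (a ^+ 2)%:P).
Proof.
rewrite /pq_binom
  (@prodr_ord_even_pairs _ (fun k => 'X - (x ^+ ((2 * n).-1 - k) * y ^+ k * a)%:P)).
apply: eq_big_nat => j /andP [j_ge1 j_le].
have -> : ((2 * n).-1 - (n - j) = (n - j) + (2 * j - 1))%N by lia.
have -> : ((2 * n).-1 - (n - 1 + j) = n - j)%N by lia.
have -> : (n - 1 + j = (n - j) + (2 * j - 1))%N by lia.
rewrite pq_factor_pairE signr_subn_addn; last by lia.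
have -> : (-1) ^+ (2 * j - 1) = -1 :> R.
  have -> : (2 * j - 1 = 2 * (j - 1) + 1)%N by lia.
  by rewrite exprD signr_double expr1 mul1r.
by rewrite mulN1r polyCN.
Qed.

Lemma pq_binom_odd a n :
  pq_binom a (2 * n).+1 =
  ('X - ((-1) ^+ n * a)%:P) *
  \prod_(1 <= j < n.+1)
    ('X^2 - ((-1) ^+ (n + j) * (x ^+ (2 * j) + y ^+ (2 * j)) * a) *: 'X
       + (a ^+ 2)%:P).
Proof.
rewrite /pq_binom
  (@prodr_ord_odd_pairs _ (fun k => 'X - (x ^+ ((2 * n).+1.-1 - k) * y ^+ k * a)%:P)) /=.
congr (_ * _).
  have -> : (2 * n - n = n)%N by lia.
  by rewrite -exprMn xy_eqN1.
apply: eq_big_nat => j /andP [j_ge1 j_le].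
have -> : (2 * n - (n - j) = (n - j) + 2 * j)%N by lia.
have -> : (2 * n - (n + j) = n - j)%N by lia.
rewrite {1}(_ : (n + j = (n - j) + 2 * j)%N); last by lia.
rewrite pq_factor_pairE signr_subn_addn; last by lia.
by rewrite signr_double mul1r.
Qed.

End PQBinomial.

Arguments pq_binom {R} x y a n.

Section Golden.
Variable R : rcfType.
Local Notation phi := (phi R).
Let psi : R := 1 - phi.

Lemma phi_sq : phi ^+ 2 = phi + 1.
Proof.
have sqrt5_sq := @sqr_sqrtr R 5 ltac:(by []).
rewrite /Defs.phi; set s := Num.sqrt 5 in sqrt5_sq *.
rewrite expr2; field: sqrt5_sq; lra.
Qed.

Lemma phi_gt1_lt2 : 1 < phi < 2.
Proof.
have sqrt5_sq := @sqr_sqrtr R 5 ltac:(by []).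
have sqrt5_ge0 : 0 <= Num.sqrt (5 : R) := sqrtr_ge0 _.
rewrite /Defs.phi; set s := Num.sqrt 5 in sqrt5_sq sqrt5_ge0 *.
have s_gt1 : 1 < s by nra.
have s_lt3 : s < 3 by nra.
apply/andP; split; lra.
Qed.

Lemma phi_neq0 : phi != 0.
Proof. by case/andP: phi_gt1_lt2 => phi_gt1 _; rewrite gt_eqF //; lra. Qed.

Lemma phiV : phi^-1 = phi - 1.
Proof.
have := phi_sq; rewrite expr2 => phi_sq_expr2.
by apply: (mulfI phi_neq0); rewrite mulfV ?phi_neq0 //; ring: phi_sq_expr2.
Qed.

Lemma phi_mul_psi : phi * psi = -1.
Proof. have := phi_sq; rewrite /psi => phi_sq_expr2; ring: phi_sq_expr2. Qed.

Lemma phiDV_neq0 : phi + phi^-1 != 0.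
Proof. by rewrite phiV; case/andP: phi_gt1_lt2 => phi_gt1 _; rewrite gt_eqF //; lra. Qed.

Lemma Fib_Binet m : Fib R m = (phi ^+ m - psi ^+ m) / (phi + phi^-1).
Proof. by rewrite /Fib phiV /psi opprB. Qed.

Lemma Fib0 : Fib R 0 = 0.
Proof. by rewrite /Fib !expr0 subrr mul0r. Qed.

Lemma Fib_neq0 m : (0 < m)%N -> Fib R m != 0.
Proof.
move=> m_gt0; rewrite Fib_Binet mulf_eq0 invr_eq0 negb_or phiDV_neq0 andbT subr_eq0.
case/andP: phi_gt1_lt2 => phi_gt1 phi_lt2.
have phiX_gt1 : 1 < phi ^+ m by rewrite exprn_egt1 // -lt0n.
have psiX_le1 : `|psi| ^+ m <= 1.
  by apply: exprn_ile1 => //; rewrite /psi ler_norml; apply/andP; split; lra.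
have := ler_norm (psi ^+ m); rewrite normrX => psiX_le.
by rewrite gt_eqF //; lra.
Qed.

Lemma Fib_Lucas j : (0 < j)%N -> Fib R j + 2 * Fib R (j - 1) = phi ^+ j + psi ^+ j.
Proof.
case: j => [//|j] _; rewrite subn1 /= !Fib_Binet.
have := phiDV_neq0; rewrite phiV => c_neq0.
have := phi_sq; rewrite expr2 => phi_sq_expr2.
rewrite /psi !exprS.
set u := phi ^+ j; set v := (1 - phi) ^+ j.
by field: phi_sq_expr2.
Qed.

Lemma FfactS m : Ffact R m.+1 = Ffact R m * Fib R m.+1.
Proof. by rewrite /Ffact big_nat_recr. Qed.

Lemma golden_binomE (a : R) n : golden_binom a n = pq_binom phi psi a n.
Proof.
apply: eq_bigr => k _; congr (_ - (_ * a)%:P).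
have le_k : (k <= n.-1)%N by case: k => k /= lt_kn; lia.
have -> : (n.-1)%:Z - (2 * k)%:Z = (n.-1 - k)%:Z + (- (k%:Z)) by lia.
rewrite expfzDr ?phi_neq0 // -exprnN mulrCA; congr (_ * _).
by rewrite -exprVn -exprMn mulN1r phiV opprB.
Qed.

Lemma coef_DF (p : {poly R}) i : (DF p)`_i = Fib R i.+1 * p`_i.+1.
Proof.
rewrite /DF coef_poly; case: ltnP => // le_size.
by rewrite nth_default ?mulr0 //; move: le_size; case: (size p).
Qed.

Lemma DFZ (c : R) (p : {poly R}) : DF (c *: p) = c *: DF p.
Proof. by apply/polyP => i; rewrite coefZ !coef_DF coefZ mulrCA. Qed.

Lemma mulX_DF (p : {poly R}) : 'X * DF p = \poly_(i < size p) (Fib R i * p`_i).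
Proof.
apply/polyP => i; rewrite coefXM !coef_poly.
case: i => [|j] /=; first by rewrite Fib0 mul0r; case: ifP.
by case: (size p).
Qed.

Lemma mulX_DF_dilate (p : {poly R}) :
  (phi + phi^-1) *: ('X * DF p) = (p \Po (phi *: 'X)) - (p \Po (psi *: 'X)).
Proof.
rewrite mulX_DF !comp_polyZX; apply/polyP => i; rewrite coefZ coefB !coef_poly.
case: ifP => _; rewrite ?mulr0 ?subr0 // Fib_Binet mulrA mulrCA mulfV ?phiDV_neq0 //.
by rewrite mulr1 mulrBl.
Qed.

Lemma DF_golden_binomS (a : R) m :
  DF (golden_binom a m.+1) = Fib R m.+1 *: golden_binom a m.
Proof.
have X_neq0 : ('X : {poly R}) != 0 by rewrite polyX_eq0.
apply: (scalerI phiDV_neq0); apply: (mulfI X_neq0).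
rewrite -!scalerAr mulX_DF_dilate !golden_binomE.
rewrite pq_binomS_dilate_l ?pq_binomS_dilate_r ?phi_mul_psi //.
rewrite scalerA [_ * Fib R _]mulrC Fib_Binet divfK ?phiDV_neq0 //.
rewrite -!mul_polyC !polyCM polyCB; ring.
Qed.

Lemma DF_Pgold (a : R) n : (1 <= n)%N -> DF (Pgold a n) = Pgold a n.-1.
Proof.
case: n => [//|m] _; rewrite /Pgold DFZ DF_golden_binomS scalerA FfactS invfM.
by rewrite -mulrA mulVf ?Fib_neq0 // mulr1.
Qed.

Lemma Pgold_even (a : R) n :
  Pgold a (2 * n) =
  (Ffact R (2 * n))^-1 *:
    \prod_(1 <= k < n.+1)
      ('X^2 - ((-1) ^+ (n + k) * (Fib R (2 * k - 1) + 2 * Fib R (2 * k - 2)) * a) *: 'X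
         - (a ^+ 2)%:P).
Proof.
rewrite /Pgold golden_binomE pq_binom_even ?phi_mul_psi //.
congr (_ *: _); apply: eq_big_nat => k /andP [k_ge1 _].
have -> : (2 * k - 2 = 2 * k - 1 - 1)%N by lia.
by rewrite Fib_Lucas //; lia.
Qed.

Lemma Pgold_odd (a : R) n :
  Pgold a (2 * n + 1) =
  (Ffact R (2 * n + 1))^-1 *:
    (('X - ((-1) ^+ n * a)%:P) *
     \prod_(1 <= k < n.+1)
       ('X^2 - ((-1) ^+ (n + k) * (Fib R (2 * k) + 2 * Fib R (2 * k - 1)) * a) *: 'X
          + (a ^+ 2)%:P)).
Proof.
rewrite /Pgold golden_binomE addn1 pq_binom_odd ?phi_mul_psi //.
congr (_ *: (_ * _)); apply: eq_big_nat => k /andP [k_ge1 _].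
by rewrite Fib_Lucas // muln_gt0 k_ge1.
Qed.

End Golden.

Theorem mainTheorem12 (R : rcfType) (a : R) :
  (forall n : nat, (1 <= n)%N -> DF (Pgold a n) = Pgold a n.-1) /\
  (forall n : nat, (1 <= n)%N ->
     Pgold a (2 * n) =
     (Ffact R (2 * n))^-1 *:
       \prod_(1 <= k < n.+1)
         ('X^2 - ((-1) ^+ (n + k) * (Fib R (2 * k - 1) + 2 * Fib R (2 * k - 2)) * a) *: 'X
               - (a ^+ 2)%:P)) /\
  (forall n : nat,
     Pgold a (2 * n + 1) =
     (Ffact R (2 * n + 1))^-1 *:
       (('X - ((-1) ^+ n * a)%:P) *
        \prod_(1 <= k < n.+1)
          ('X^2 - ((-1) ^+ (n + k) * (Fib R (2 * k) + 2 * Fib R (2 * k - 1)) * a) *: 'X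
                + (a ^+ 2)%:P))).
Proof.
split; first exact: DF_Pgold.
split; first by move=> n _; exact: Pgold_even.
exact: Pgold_odd.
Qed.
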